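(* Let $(G_n)$ be a sequence of graphs with $\min_{v\in V}\delta_v=\omega(\log n)$, let $k\ge3$ be odd and $p_k^\star<p\le1$, and run the $(k,p,\mathcal B)$-Edge-Majority dynamics from the configuration in which every node is $\mathcal R$. Then there exists a constant $T=T(p,k)$ such that $\Pr(\tau\le T)=1-o(1)$.
   Context: $G_n=(V,E)$, $V=\{1,\dots,n\}$, $N(u)$ neighbourhood, $\delta_u=|N(u)|$, $\mathrm{vol}(S)=\sum_{v\in S}\delta_v$; asymptotics as $n\to\infty$. States in $\{\mathcal R,\mathcal B\}$; $B^{(t)}$ is the set of $\mathcal B$ nodes at round $t$, and $\tau=\inf\{t\ge0:\mathrm{vol}(B^{(t)})/\mathrm{vol}(V)>1/2\}$. $(k,p,\mathcal B)$-Edge-Majority: in each round $t\ge1$ every node $u$ independently samples $k$ neighbours uniformly with replacement; for each sampled $v$, independently, $u$ sees $v$ as $\mathcal B$ with probability $p$ and otherwise sees $v$'s true state at round $t-1$; $u$ adopts the state seen more often. $F_{p,k}(x)=\Pr[\mathrm{Bin}(k,(1-p)x)\ge(k+1)/2]$. $p_k^\star\in[1/9,1/2)$ is the (unique) value such that for $0\le p<p_k^\star$, $F_{p,k}(x)=x$ on $[0,1]$ has exactly three solutions, for $p=p_k^\star$ exactly two, and for $p>p_k^\star$ only $0$. *)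

From mathcomp Require Import all_boot all_order all_algebra.
From mathcomp Require Import all_classical all_reals all_analysis.
Set Implicit Arguments. Unset Strict Implicit. Unset Printing Implicit Defensive.
Import Order.TTheory GRing.Theory Num.Theory.
Local Open Scope ring_scope.


Section EdgeMajority.
Variable R : realType.

Definition simple_graph (n : nat) (G : rel 'I_n) : Prop :=
  (forall u v, G u v = G v u) /\ (forall u, ~~ G u u).

Definition nbhd n (G : rel 'I_n) (u : 'I_n) : {set 'I_n} := [set v | G u v].
Definition deg n (G : rel 'I_n) (u : 'I_n) : nat := #|nbhd G u|.
Definition vol n (G : rel 'I_n) (S : {set 'I_n}) : nat := \sum_(v in S) deg G v.

(* Configurations: the set B of nodes in state B (all others are in state R). *)

(* Written literally:
   a sample outcome s assigns to each of the k samples i a neighbour (s i).1,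
   chosen uniformly in N(u), and a coin (s i).2 which is true (u sees B regardless)
   with probability p; otherwise u sees the true state of (s i).1.  u adopts B iff
   B is seen at least (k+1)/2 times (k odd: strict majority). *)
Definition adoptB_prob (k : nat) (p : R) n (G : rel 'I_n) (B : {set 'I_n})
    (u : 'I_n) : R :=
  \sum_(s : {ffun 'I_k -> 'I_n * bool})
     (\prod_(i < k) ((G u (s i).1)%:R / (deg G u)%:R *
                      (if (s i).2 then p else 1 - p)))
     * ((k.+1)./2 <= #|[set i | (s i).2 || ((s i).1 \in B)]|)%N%:R.

Definition trans (k : nat) (p : R) n (G : rel 'I_n) (B B' : {set 'I_n}) : R :=
  \prod_(u : 'I_n) (if u \in B' then adoptB_prob k p G B u
                    else 1 - adoptB_prob k p G B u).

Definition majB n (G : rel 'I_n) (B : {set 'I_n}) : bool :=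
  (vol G B)%:R / (vol G [set: 'I_n])%:R > (2%:R : R)^-1.

(* Pr(tau <= T) for the dynamics started from the all-R configuration B^(0) = set0:
   sum over trajectories (B^(0),...,B^(T)) of their probability times the
   indicator that vol(B^(t))/vol(V) > 1/2 for some t <= T. *)
Definition prob_tau_le (k : nat) (p : R) n (G : rel 'I_n) (T : nat) : R :=
  \sum_(path : {ffun 'I_T.+1 -> {set 'I_n}})
     ((path ord0 == finset.set0)%:R *
      (\prod_(t < T) trans k p G (path (inord t)) (path (inord t.+1))) *
      ([exists t, majB G (path t)])%:R).

Definition Fpk (p : R) (k : nat) (x : R) : R :=
  \sum_(j < k.+1 | ((k.+1)./2 <= j)%N)
     'C(k, j)%:R * ((1 - p) * x) ^+ j * (1 - (1 - p) * x) ^+ (k - j).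

(* p_k^*: by the context, for p in [0,1], F_{p,k}(x)=x has only the solution 0
   on [0,1] exactly when p > p_k^*; hence p_k^* is the infimum of that set. *)
Definition pstar (k : nat) : R :=
  inf (fun p : R => 0 <= p <= 1 /\
        forall x : R, 0 <= x <= 1 -> Fpk p k x = x -> x = 0).

End EdgeMajority.

From mathcomp Require Import all_boot all_order all_algebra.
From mathcomp Require Import all_classical all_reals all_analysis.
From mathcomp Require Import ring lra zify.
Import Order.TTheory GRing.Theory Num.Theory numFieldNormedType.Exports.
Set Implicit Arguments. Unset Strict Implicit. Unset Printing Implicit Defensive.
Local Open Scope ring_scope.

(* A node whose neighbourhood has a fraction x of R nodes adopts R with
   probability F(x) = Pr[Bin(k, (1 - p) x) >= (k + 1) / 2], independently of
   the other nodes.  For p > p_k^* there is p' < p for which F has no positive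
   fixed point, so F for p' lies below the diagonal; as
   (1 - p) x = (1 - p') (r x) with r = (1 - p) / (1 - p') < 1, F for p lies
   below the line r x.  Hence a_t = 1/4 + 3/4 r^t satisfies
   F(a_t) + (1 - r) / 4 <= a_(t+1).  If at round t every node has at most a
   fraction a_t of R neighbours, then at round t + 1 a Chernoff bound with
   margin (1 - r) / 4 and a union bound over the nodes give the same with
   a_(t+1), except with probability 1/n, since all degrees are at least
   C log n.  When r^T < 1/3 we get a_T < 1/2, and double counting the edges
   turns "every node has less than half of its neighbours in R" into
   vol(B) > vol(V) / 2. *)

Section FfunRcons.
Variable X : finType.

Definition ffun_rcons k (g : {ffun 'I_k -> X}) (x : X) : {ffun 'I_k.+1 -> X} :=
  [ffun i => if unlift ord_max i is Some j then g j else x].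

Lemma widen_ord_lift k (j : 'I_k) : widen_ord (leqnSn k) j = lift ord_max j.
Proof. by apply: val_inj; rewrite /= /bump leqNgt ltn_ord. Qed.

Lemma ffun_rcons_widen k (g : {ffun 'I_k -> X}) x j :
  ffun_rcons g x (widen_ord (leqnSn k) j) = g j.
Proof. by rewrite ffunE widen_ord_lift liftK. Qed.

Lemma ffun_rcons_max k (g : {ffun 'I_k -> X}) x : ffun_rcons g x ord_max = x.
Proof. by rewrite ffunE unlift_none. Qed.

Lemma ffun_rcons_inord k (g : {ffun 'I_k.+1 -> X}) x t :
  (t <= k)%N -> ffun_rcons g x (inord t) = g (inord t).
Proof.
move=> tk; have -> : (inord t : 'I_k.+2) = widen_ord (leqnSn k.+1) (inord t).
  by apply: val_inj; rewrite /= !inordK // ltnS // ltnW.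
exact: ffun_rcons_widen.
Qed.

Lemma ffun_rcons_inord_max k (g : {ffun 'I_k -> X}) x :
  ffun_rcons g x (inord k) = x.
Proof.
have -> : (inord k : 'I_k.+1) = ord_max by apply: val_inj; rewrite /= inordK.
exact: ffun_rcons_max.
Qed.

Lemma prod_ffun_rcons (V : pzSemiRingType) k (w : X -> V) (g : {ffun 'I_k -> X}) x :
  \prod_(i < k.+1) w (ffun_rcons g x i) = \prod_(i < k) w (g i) * w x.
Proof.
rewrite big_ord_recr /= ffun_rcons_max.
by under eq_bigr => i _ do rewrite ffun_rcons_widen.
Qed.

Lemma card_ffun_rcons (P : pred X) k (g : {ffun 'I_k -> X}) x :
  #|[set i | P (ffun_rcons g x i)]| = (#|[set i | P (g i)]| + P x)%N.
Proof.
rewrite -!sum1dep_card big_mkcond [in RHS]big_mkcond big_ord_recr /=.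
rewrite ffun_rcons_max.
under eq_bigr => j _ do rewrite ffun_rcons_widen.
by case: (P x).
Qed.

Lemma sum_ffun_rcons (V : nmodType) k (F : {ffun 'I_k.+1 -> X} -> V) :
  \sum_f F f = \sum_(g : {ffun 'I_k -> X}) \sum_(x : X) F (ffun_rcons g x).
Proof.
rewrite pair_bigA /=.
rewrite (reindex (fun gx : {ffun 'I_k -> X} * X => ffun_rcons gx.1 gx.2)) //=.
exists (fun f : {ffun 'I_k.+1 -> X} =>
          ([ffun j => f (widen_ord (leqnSn k) j)], f ord_max)).
  move=> [g x] _ /=; congr (_, _); last exact: ffun_rcons_max.
  by apply/ffunP => j; rewrite ffunE ffun_rcons_widen.
move=> f _; apply/ffunP => i; rewrite ffunE.
by case: unliftP => [j ->|->] //; rewrite ffunE widen_ord_lift.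
Qed.

End FfunRcons.

Lemma natr_card_sum (R : realType) (T : finType) (A : {pred T}) :
  (#|A|%:R : R) = \sum_x (x \in A)%:R.
Proof.
rewrite -sum1_card natr_sum big_mkcond /=.
by apply: eq_bigr => x _; case: (x \in A).
Qed.

Lemma odd_majority k a b : odd k -> (a + b)%N = k ->
  ((k.+1)./2 <= a)%N = ~~ ((k.+1)./2 <= b)%N.
Proof.
move=> ok; have kE : k = (k./2).*2.+1 by rewrite -[LHS]odd_double_half ok.
have -> : (k.+1)./2 = (k./2).+1 by rewrite [in LHS]kE /= doubleK.
move: (k./2) kE => h ->.
by case: leqP => /= ha; lia.
Qed.

Section BinomialTail.
Variable R : realType.

Fixpoint bin_tail (k m : nat) (y : R) : R :=
  if k is k'.+1 then y * bin_tail k' m.-1 y + (1 - y) * bin_tail k' m y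
  else (m == 0)%:R.

Lemma bin_tail_at0 k m : bin_tail k m 0 = (m == 0)%:R.
Proof. by elim: k => [|k IH] //=; rewrite IH; ring. Qed.

Lemma bin_tail_itv k m y : 0 <= y <= 1 -> 0 <= bin_tail k m y <= 1.
Proof.
move=> /andP[y0 y1]; elim: k m => [|k IH] m /=.
  by case: (m == 0); rewrite ?lexx ?ler01.
have [/andP[a0 a1] /andP[b0 b1]] := (IH m.-1, IH m).
by apply/andP; split; nra.
Qed.

Lemma bin_tailS_le k m y : 0 <= y <= 1 -> bin_tail k m.+1 y <= bin_tail k m y.
Proof.
move=> /andP[y0 y1]; elim: k m => [|k IH] m /=.
  by case: (m == 0); rewrite ?lexx ?ler01.
have h1 : bin_tail k m y <= bin_tail k m.-1 y by case: m => [|m] //=; rewrite IH.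
have h2 := IH m.
by nra.
Qed.

Lemma ler_bin_tail k m y y' : 0 <= y -> y <= y' -> y' <= 1 ->
  bin_tail k m y <= bin_tail k m y'.
Proof.
move=> y0 yy' y'1; have y1 := le_trans yy' y'1; have y'0 := le_trans y0 yy'.
elim: k m => [|k IH] m //=.
have := IH m.-1; have := IH m.
have : bin_tail k m y <= bin_tail k m.-1 y.
  by case: m => [|m] //; rewrite bin_tailS_le // y0.
have /andP[c0 c1] : 0 <= bin_tail k m y <= 1 by rewrite bin_tail_itv // y0.
have /andP[d0 d1] : 0 <= bin_tail k m.-1 y' <= 1 by rewrite bin_tail_itv // y'0.
have /andP[e0 e1] : 0 <= bin_tail k m y' <= 1 by rewrite bin_tail_itv // y'0.
by nra.
Qed.

Lemma continuous_bin_tail k m : continuous (bin_tail k m).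
Proof.
elim: k m => [|k IH] m y /=; first exact: cst_continuous.
change ({for y, continuous (id \* bin_tail k m.-1 + (cst 1 - id) \* bin_tail k m)}).
apply: continuousD; apply: continuousM; [exact: cvg_id|exact: IH| |exact: IH].
by apply: continuousB; [exact: cst_continuous|exact: cvg_id].
Qed.

Lemma bin_tailE k m (y : R) : bin_tail k m y =
  \sum_(j < k.+1 | (m <= j)%N) 'C(k, j)%:R * y ^+ j * (1 - y) ^+ (k - j).
Proof.
pose t k j := 'C(k, j)%:R * y ^+ j * (1 - y) ^+ (k - j).
suff tailE : bin_tail k m y = \sum_(j < k.+1) if (m <= j)%N then t k j else 0.
  by rewrite big_mkcond.
elim: k m => [|k IH] m.
  by rewrite big_ord1 /t /= bin0 !expr0 !mulr1 leqn0; case: (m == 0).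
have pascal j : t k.+1 j.+1 = y * t k j + (1 - y) * t k j.+1.
  rewrite /t binS natrD subSS; case: (ltnP k j.+1) => kj.
    by rewrite (bin_small kj) !mul0r add0r mulr0 addr0 exprS; ring.
  by rewrite -(subnSK kj) !exprS; ring.
have shift : \sum_(i < k.+1) (if (m.-1 <= i)%N then t k i else 0) =
             \sum_(i < k.+1) (if (m <= i.+1)%N then t k i else 0).
  by apply: eq_bigr => i _; case: m.
have head : (if (m <= 0)%N then t k.+1 0 else 0) =
            (1 - y) * if (m <= 0)%N then t k 0 else 0.
  by rewrite /t !bin0 !subn0 exprS; case: ifP => _; ring.
have extend : \sum_(i < k.+1) (if (m <= i)%N then t k i else 0) =
    (if (m <= 0)%N then t k 0 else 0) +
    \sum_(i < k.+1) (if (m <= i.+1)%N then t k i.+1 else 0).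
  rewrite -[RHS](big_ord_recl k.+1 (fun i => if (m <= i)%N then t k i else 0)).
  by rewrite [RHS]big_ord_recr /= {3}/t bin_small // !mul0r if_same addr0.
rewrite /= !IH shift extend [RHS]big_ord_recl head mulrDr addrCA; congr (_ + _).
under [RHS]eq_bigr => i _ do rewrite lift0 pascal.
rewrite !big_distrr -big_split; apply: eq_bigr => i _ /=.
by case: ifP => _; rewrite ?mulr0 ?addr0.
Qed.

Lemma iid_sample_count_ge (X : finType) (w : X -> R) (P : pred X) (y : R) k m :
  \sum_x w x = 1 -> \sum_x w x * (P x)%:R = y ->
  \sum_(s : {ffun 'I_k -> X}) (\prod_(i < k) w (s i)) *
     (m <= #|[set i | P (s i)]|)%N%:R = bin_tail k m y.
Proof.
move=> w1 wP; elim: k m => [|k IH] m.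
  rewrite (eq_bigr (fun=> (m == 0)%:R)) ?sumr_const ?card_ffun ?card_ord //= => s _.
  have -> : #|[set i | P (s i)]| = 0%N.
    by apply/eqP; rewrite -leqn0; have := max_card [set i | P (s i)]; rewrite card_ord.
  by rewrite big_ord0 mul1r leqn0.
have last_draw c : \sum_x w x * (m <= c + P x)%N%:R =
                   y * (m.-1 <= c)%N%:R + (1 - y) * (m <= c)%N%:R.
  have split x : (m <= c + P x)%N%:R =
      (P x)%:R * ((m.-1 <= c)%N%:R - (m <= c)%N%:R) + (m <= c)%N%:R :> R.
    by case: (P x); rewrite /= ?addn0 ?addn1 ?mul0r ?add0r ?mul1r ?subrK //; case: m.
  under eq_bigr => x _ do rewrite split mulrDr mulrA.
  by rewrite big_split -!mulr_suml /= wP w1; ring.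
rewrite sum_ffun_rcons /=.
under eq_bigr => g _ do under eq_bigr => x _ do
  rewrite prod_ffun_rcons card_ffun_rcons -mulrA.
under eq_bigr => g _ do
  rewrite -big_distrr /= last_draw mulrDr [_ * (y * _)]mulrCA [_ * ((1 - y) * _)]mulrCA.
by rewrite big_split /= -!big_distrr /= !IH.
Qed.
End BinomialTail.

Lemma adoptB_probE (R : realType) k (p : R) n (G : rel 'I_n) B u : odd k -> (0 < deg G u)%N ->
  adoptB_prob k p G B u =
  1 - bin_tail k (k.+1)./2 ((1 - p) * (#|nbhd G u :\: B|%:R / (deg G u)%:R)).
Proof.
move=> ok deg_gt0; set d : R := (deg G u)%:R.
have d_neq0 : d != 0 by rewrite pnatr_eq0 -lt0n.
pose w (s : 'I_n * bool) := (G u s.1)%:R / d * (if s.2 then p else 1 - p).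
have sum_pair (F : 'I_n * bool -> R) : \sum_s F s = \sum_v \sum_b F (v, b).
  by rewrite pair_big; apply: eq_bigr => -[].
have sumG : \sum_v (G u v)%:R = d.
  by rewrite /d /deg natr_card_sum; apply: eq_bigr => v _; rewrite inE.
have w1 : \sum_s w s = 1.
  rewrite sum_pair; under eq_bigr => v _ do rewrite big_bool /w /= -mulrDr subrKC mulr1.
  by rewrite -mulr_suml sumG divff.
have wR : \sum_s w s * (~~ (s.2 || (s.1 \in B)))%:R =
          (1 - p) * (#|nbhd G u :\: B|%:R / d).
  rewrite sum_pair natr_card_sum mulr_suml mulr_sumr.
  apply: eq_bigr => v _; rewrite big_bool /w /= !inE.
  by case: (G u v); case: (v \in B); rewrite /=; ring.
have total : \sum_(s : {ffun 'I_k -> 'I_n * bool}) \prod_(i < k) w (s i) = 1.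
  by rewrite -(bigA_distr_bigA (fun (_ : 'I_k) s => w s)) /= w1 prodr_const expr1n.
rewrite /adoptB_prob -(iid_sample_count_ge _ _ w1 wR) -[X in _ = X - _]total -sumrB.
apply: eq_bigr => s _; rewrite -[X in _ = X - _]mulr1 -mulrBr; congr (_ * _).
rewrite (@odd_majority k _ #|[set i | ~~ ((s i).2 || ((s i).1 \in B))]|) //.
  by case: (_ <= _)%N; rewrite ?subrr ?subr0.
set Bseen := [set i | (s i).2 || ((s i).1 \in B)].
have -> : [set i | ~~ ((s i).2 || ((s i).1 \in B))] = ~: Bseen.
  by apply/setP => i; rewrite !inE.
by rewrite cardsC card_ord.
Qed.

Lemma expR_le_quadratic (R : realType) (x : R) : 0 <= x <= 1/2 ->
  expR x <= 1 + x + 2 * x ^+ 2.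
Proof.
move=> /andP[x0 x_le].
have em : 1 - x <= expR (- x) := expR_ge1Dx (- x).
have e_inv : expR x * expR (- x) = 1 by rewrite -expRD subrr expR0.
have e_gt0 := expR_gt0 x.
have : expR x * (1 - x) <= 1 by rewrite -[X in _ <= X]e_inv ler_wpM2l // ltW.
by nra.
Qed.

Section IndependentSets.
Variables (R : realType) (T : finType) (q : T -> R).
Hypothesis q01 : forall u, 0 <= q u <= 1.

Definition indep_set_prob (Y : {set T}) : R :=
  \prod_u (if u \in Y then q u else 1 - q u).

Lemma indep_set_prob_ge0 Y : 0 <= indep_set_prob Y.
Proof.
apply: prodr_ge0 => u _; have /andP[q0 q1] := q01 u.
by case: (u \in Y); rewrite ?subr_ge0.
Qed.

Lemma indep_set_mgf (c : T -> R) :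
  \sum_Y indep_set_prob Y * \prod_u (if u \in Y then 1 else c u) =
  \prod_u (q u + (1 - q u) * c u).
Proof.
rewrite (bigA_distr 1 +%R q (fun u => (1 - q u) * c u)).
apply: eq_big => // Y _; rewrite -big_split /=; apply: eq_bigr => u _.
by case: (u \in Y); rewrite ?mulr1.
Qed.

Lemma sum_indep_set_prob : \sum_Y indep_set_prob Y = 1.
Proof.
transitivity (\prod_u (q u + (1 - q u))); last by apply: big1 => u _; rewrite subrKC.
by rewrite (bigA_distr 1 +%R); apply: eq_bigl.
Qed.

Lemma indep_set_chernoff (N : {set T}) (mu a dl : R) :
  0 <= mu <= 1 -> 0 < dl <= 1 -> (forall u, u \in N -> 1 - q u <= mu) ->
  mu + dl <= a ->
  \sum_Y indep_set_prob Y * (a * #|N|%:R < #|N :\: Y|%:R)%R%:R <=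
  expR (- (dl ^+ 2 / 8) * #|N|%:R).
Proof.
move=> /andP[mu0 mu1] /andP[dl0 dl1] qN mu_a.
set l := dl / 4; set d : R := #|N|%:R.
have l0 : 0 <= l by rewrite divr_ge0 // ltW.
pose c u := if u \in N then expR l else 1.
have prodE (Y : {set T}) : \prod_u (if u \in Y then 1 else c u) = expR (l * #|N :\: Y|%:R).
  rewrite natr_card_sum mulr_sumr expR_sum; apply: eq_bigr => u _.
  by rewrite /c inE; case: (u \in Y); case: (u \in N); rewrite ?mulr0 ?mulr1 ?expR0.
have markov (Y : {set T}) : (a * d < #|N :\: Y|%:R)%R%:R <=
                expR (- (l * a * d)) * \prod_u (if u \in Y then 1 else c u).
  rewrite prodE -expRD; case: ltrP => h; last exact: expR_ge0.
  apply: le_trans (expR_ge1Dx _); rewrite lerDl -mulrA addrC -mulrBr.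
  by rewrite mulr_ge0 // subr_ge0 ltW.
have factor u : u \in N -> q u + (1 - q u) * c u <= expR (mu * (expR l - 1)).
  move=> uN; rewrite /c uN /=; have /andP[q0 q1] := q01 u; have := qN u uN.
  have : 1 <= expR l by apply: le_trans (expR_ge1Dx _); lra.
  by move=> e1 qmu; apply: le_trans (expR_ge1Dx _); nra.
have exponent : mu * (expR l - 1) - l * a <= - (dl ^+ 2 / 8).
  have el : expR l <= 1 + l + 2 * l ^+ 2 by apply: expR_le_quadratic; rewrite l0 /l; lra.
  have : mu * (expR l - 1) <= mu * (l + 2 * l ^+ 2) by apply: ler_wpM2l => //; lra.
  by rewrite /l; nra.
apply: le_trans (ler_sum _ (fun Y _ => ler_wpM2l (indep_set_prob_ge0 Y) (markov Y))) _.
under eq_bigr => Y _ do rewrite mulrCA.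
rewrite -big_distrr /= indep_set_mgf (bigID (mem N)) /=.
rewrite [X in _ * (_ * X)]big1 ?mulr1 => [|u /negbTE uN]; last by rewrite /c uN mulr1 subrKC.
apply: (@le_trans _ _ (expR (- (l * a * d)) * expR (mu * (expR l - 1)) ^+ #|N|)).
  rewrite ler_wpM2l ?expR_ge0 // -prodr_const; apply: ler_prod => u uN.
  have /andP[q0 q1] := q01 u.
  by rewrite factor // addr_ge0 // mulr_ge0 ?subr_ge0 // /c uN expR_ge0.
rewrite -expRM_natl -expRD ler_expR -/d.
have d0 : 0 <= d by rewrite ler0n.
by nra.
Qed.

End IndependentSets.

Lemma sum_union_bound (R : realType) (T V : finType) (w : T -> R) (P : V -> pred T) :
  (forall y, 0 <= w y) ->
  \sum_y w y * (~~ [forall v, P v y])%:R <= \sum_v \sum_y w y * (~~ P v y)%:R.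
Proof.
move=> w_ge0; rewrite exchange_big /=; apply: ler_sum => y _.
rewrite -mulr_sumr; apply: ler_wpM2l => //.
case: forallP => [_|/existsNP[v /negP Pv]]; first by apply: sumr_ge0 => v _.
by rewrite (bigD1 v) //= Pv lerDl; apply: sumr_ge0 => i _.
Qed.

Section MarkovChain.
Variables (R : realType) (X : finType) (K : X -> X -> R) (x0 : X).

Fixpoint chain_law t : X -> R :=
  if t is t'.+1 then fun y => \sum_x chain_law t' x * K x y
  else fun x => (x == x0)%:R.

Lemma sum_paths_chain_law T (h : X -> R) :
  \sum_(path : {ffun 'I_T.+1 -> X})
     ((path ord0 == x0)%:R *
      (\prod_(t < T) K (path (inord t)) (path (inord t.+1))) * h (path ord_max))
  = \sum_x chain_law T x * h x.
Proof.
elim: T h => [|T IH] h; rewrite sum_ffun_rcons.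
  have -> : (ord0 : 'I_1) = ord_max by apply: val_inj.
  under eq_bigr => g _ do under eq_bigr => x _ do rewrite ffun_rcons_max big_ord0 mulr1.
  by rewrite sumr_const card_ffun card_ord expn0.
have ord0E m : (ord0 : 'I_m.+1) = inord 0 by apply: val_inj; rewrite /= inordK.
have ord_maxE : (ord_max : 'I_T.+1) = inord T by apply: val_inj; rewrite /= inordK.
transitivity (\sum_(g : {ffun 'I_T.+1 -> X}) ((g ord0 == x0)%:R *
    (\prod_(t < T) K (g (inord t)) (g (inord t.+1))) * \sum_x K (g ord_max) x * h x)).
  apply: eq_bigr => g _; rewrite mulr_sumr; apply: eq_bigr => x _.
  rewrite big_ord_recr /= ffun_rcons_max ffun_rcons_inord_max.
  rewrite !ord0E ord_maxE !ffun_rcons_inord //.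
  under eq_bigr => i _ do rewrite !ffun_rcons_inord ?(ltnW (ltn_ord i)) ?ltn_ord //.
  by rewrite !mulrA.
rewrite (IH (fun y => \sum_x K y x * h x)); under eq_bigr => y _ do rewrite mulr_sumr.
rewrite exchange_big /=; apply: eq_bigr => x _.
by rewrite mulr_suml; apply: eq_bigr => y _; rewrite mulrA.
Qed.

Hypothesis K_ge0 : forall x y, 0 <= K x y.
Hypothesis sum_K : forall x, \sum_y K x y = 1.

Lemma chain_law_ge0 t x : 0 <= chain_law t x.
Proof.
elim: t x => [|t IH] x /=; first by rewrite ler0n.
by apply: sumr_ge0 => y _; rewrite mulr_ge0.
Qed.

Lemma sum_chain_law t : \sum_x chain_law t x = 1.
Proof.
elim: t => [|t IH] /=.
  by rewrite (bigD1 x0) //= eqxx big1 ?addr0 // => x /negbTE ->.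
rewrite exchange_big /= -[RHS]IH; apply: eq_bigr => x _.
by rewrite -mulr_sumr sum_K mulr1.
Qed.

Lemma chain_law_good (good : nat -> pred X) (eta : R) :
  good 0 x0 ->
  (forall t x, good t x -> \sum_y K x y * (~~ good t.+1 y)%:R <= eta) ->
  forall t, 1 - t%:R * eta <= \sum_x chain_law t x * (good t x)%:R.
Proof.
move=> good0 escape t.
have eta0 : 0 <= eta.
  apply: le_trans (escape 0 x0 good0); apply: sumr_ge0 => y _.
  by rewrite mulr_ge0 ?ler0n.
have total : \sum_x chain_law t x * (good t x)%:R +
             \sum_x chain_law t x * (~~ good t x)%:R = 1.
  rewrite -big_split -[RHS](sum_chain_law t) /=; apply: eq_bigr => x _.
  by case: (good t x); rewrite /= ?mulr1 ?mulr0 ?addr0 ?add0r.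
suff : \sum_x chain_law t x * (~~ good t x)%:R <= t%:R * eta by lra.
elim: t {total} => [|t IH] /=.
  by rewrite mul0r big1 // => x _; case: eqP => [->|]; rewrite ?good0 ?mulr0 ?mul0r.
under eq_bigr => y _ do rewrite mulr_suml.
rewrite exchange_big /=.
under eq_bigr => x _ do under eq_bigr => y _ do rewrite -mulrA.
under eq_bigr => x _ do rewrite -mulr_sumr.
apply: le_trans (_ : \sum_x chain_law t x * (eta + (~~ good t x)%:R) <= _).
  apply: ler_sum => x _; apply: ler_wpM2l; first exact: chain_law_ge0.
  case: (boolP (good t x)) => [/escape gx|_]; first by rewrite /= addr0.
  apply: le_trans (_ : \sum_y K x y <= _); last by rewrite sum_K /= mulr1n lerDr.
  by apply: ler_sum => y _; case: (good t.+1 y); rewrite /= ?mulr0 ?mulr1 ?K_ge0.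
under eq_bigr => x _ do rewrite mulrDr.
rewrite big_split /= -mulr_suml sum_chain_law mul1r -nat1r mulrDl mul1r.
by rewrite lerD2l.
Qed.
End MarkovChain.

Section Threshold.
Variable R : realType.

Lemma exists_expr_lt (r e : R) : 0 <= r < 1 -> 0 < e -> exists T : nat, r ^+ T < e.
Proof.
move=> /andP[r0 r1] e0; have : `|r| < 1 by rewrite ger0_norm.
move=> /cvg_expr/cvgr0_norm_lt/(_ e e0)[N _ hN].
by exists N; have := hN N (leqnn N); rewrite /= ger0_norm ?exprn_ge0.
Qed.

Lemma below_diagonal (g : R -> R) : continuous g -> g 1 <= 1 ->
  (forall x, 0 <= x <= 1 -> g x = x -> x = 0) ->
  forall y, 0 <= y <= 1 -> g y <= y.
Proof.
move=> g_cont g1 fix0 y /andP[y0 y1]; rewrite leNgt; apply/negP => gy.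
pose f x := g x - x.
have f_cont : continuous f.
  by move=> x; apply: continuousB; [exact: g_cont|exact: cvg_id].
have sign : Num.min (f y) (f 1) <= 0 <= Num.max (f y) (f 1).
  by rewrite ge_min le_max /f !subr_le0 g1 orbT subr_ge0 (ltW gy).
have [c] := IVT y1 (continuous_subspaceT f_cont) sign.
rewrite in_itv /= => /andP[yc c1] /eqP; rewrite subr_eq0 => /eqP gc.
have c0 : c = 0 by apply: fix0; rewrite // c1 (le_trans y0).
by move: gy; rewrite (_ : y = c) ?gc ?ltxx //; apply/le_anti; rewrite yc c0 y0.
Qed.

Lemma Fpk_bin_tail (p : R) k x : Fpk p k x = bin_tail k (k.+1)./2 ((1 - p) * x).
Proof. by rewrite bin_tailE. Qed.

Lemma pstar_adherent k (p : R) : odd k -> pstar R k < p ->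
  exists2 p', p' < p &
    0 <= p' <= 1 /\ forall x, 0 <= x <= 1 -> Fpk p' k x = x -> x = 0.
Proof.
move=> k_odd p_gt; set S := fun q : R => _ /\ _.
have m_neq0 : (k.+1)./2 != 0%N by case: k k_odd {S p_gt}.
have S1 : S 1.
  split=> [|x _]; first by rewrite ler01 lexx.
  by rewrite Fpk_bin_tail subrr mul0r bin_tail_at0 (negbTE m_neq0).
have S_inf : has_inf S by split; [exists 1 | exists 0 => q [/andP[]]].
have gap : 0 < p - pstar R k by rewrite subr_gt0.
have [p' Sp' lt_p'] := inf_adherent gap S_inf.
by exists p'; rewrite // addrC subrK in lt_p'.
Qed.

Lemma bin_tail_contraction k (p : R) : odd k -> pstar R k < p -> p <= 1 ->
  exists2 r : R, 0 <= r < 1 &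
    forall x, 0 <= x <= 1 -> bin_tail k (k.+1)./2 ((1 - p) * x) <= r * x.
Proof.
move=> k_odd p_gt p1; set m := (k.+1)./2.
have [p' lt_p' [/andP[p'0 p'1] fix0]] := pstar_adherent k_odd p_gt.
have below : forall y, 0 <= y <= 1 -> bin_tail k m ((1 - p') * y) <= y.
  apply: below_diagonal => [y||x x01]; last by rewrite -Fpk_bin_tail; exact: fix0.
    apply: continuous_comp; last exact: continuous_bin_tail.
    by apply: continuousM; [exact: cst_continuous|exact: cvg_id].
  rewrite mulr1; have : 0 <= 1 - p' <= 1 by apply/andP; split; lra.
  by move/(bin_tail_itv k m)/andP=> [].
have p'_lt1 : 0 < 1 - p' by lra.
set r := (1 - p) / (1 - p').
have r01 : 0 <= r < 1.
  by rewrite divr_ge0 ?subr_ge0 ?(ltW p'_lt1) //= ltr_pdivrMr // mul1r; lra.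
exists r => // x /andP[x0 x1].
have rx01 : 0 <= r * x <= 1 by case/andP: r01 => r0 r1; apply/andP; split; nra.
by have := below _ rx01; rewrite mulrA /r mulrCA divff ?mulr1 // gt_eqF.
Qed.
End Threshold.

Section Graph.
Variables (R : realType) (n : nat) (G : rel 'I_n).

Lemma card_nbhd_setD_le_deg v B : (#|nbhd G v :\: B| <= deg G v)%N.
Proof. by rewrite subset_leq_card // subsetDl. Qed.

Lemma sum_card_nbhd_setD B : simple_graph G ->
  \sum_v (#|nbhd G v :\: B|%:R : R) = (vol G (~: B))%:R.
Proof.
move=> [G_sym _]; under eq_bigr => v _ do rewrite natr_card_sum.
rewrite exchange_big /vol natr_sum [RHS]big_mkcond /=; apply: eq_bigr => u _.
rewrite /deg natr_card_sum inE; case: (boolP (u \in B)) => uB /=.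
  by apply: big1 => v _; rewrite !inE uB.
by apply: eq_bigr => v _; rewrite !inE uB G_sym.
Qed.

Lemma majB_of_few_R_neighbours B (a : R) : simple_graph G -> (0 < n)%N ->
  (forall u, (0 < deg G u)%N) -> a < 1/2 ->
  (forall v, #|nbhd G v :\: B|%:R <= a * (deg G v)%:R) -> majB R G B.
Proof.
move=> G_simple n_gt0 deg_gt0 a_lt few.
have volV_gt0 : (0 : R) < (vol G [set: 'I_n])%:R.
  by rewrite ltr0n /vol (bigD1 (Ordinal n_gt0)) ?inE //= addn_gt0 deg_gt0.
have volV : vol G [set: 'I_n] = (vol G B + vol G (~: B))%N.
  by rewrite /vol (big_setID B) /= finset.setTI finset.setTD.
have volC : ((vol G (~: B))%:R : R) <= a * (vol G [set: 'I_n])%:R.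
  rewrite -sum_card_nbhd_setD // /vol natr_sum mulr_sumr.
  apply: le_trans (ler_sum _ (fun v _ => few v)) _.
  by rewrite (eq_bigl _ _ (@finset.in_setT _)).
rewrite /majB ltr_pdivlMr //; rewrite volV natrD in volC volV_gt0 *.
by nra.
Qed.
End Graph.

Lemma sum_expR_le_inv (R : realType) n (c : R) (d : 'I_n -> R) : (0 < n)%N ->
  (forall v, 2 * ln n%:R <= c * d v) -> \sum_v expR (- c * d v) <= n%:R^-1.
Proof.
move=> n_gt0 d_ge.
have n_neq0 : (n%:R : R) != 0 by rewrite pnatr_eq0 -lt0n.
apply: le_trans (_ : \sum_(v : 'I_n) expR (- (2 * ln n%:R)) <= _).
  by apply: ler_sum => v _; rewrite ler_expR mulNr lerN2.
rewrite sumr_const card_ord expRN expRM_natl lnK ?posrE ?ltr0n //.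
by rewrite -(mulr_natr (n%:R ^- 2)) expr2 invfM -mulrA mulVf // mulr1.
Qed.

Section Dynamics.
Variables (R : realType) (k : nat) (p : R) (n : nat) (G : rel 'I_n).
Hypotheses (k_odd : odd k) (p01 : 0 <= p <= 1).
Local Notation m := (k.+1)./2.

Lemma frac_nbhd_setD_itv B u : (0 < deg G u)%N ->
  0 <= (#|nbhd G u :\: B|%:R / (deg G u)%:R : R) <= 1.
Proof.
move=> deg_gt0; have d_gt0 : (0 : R) < (deg G u)%:R by rewrite ltr0n.
by rewrite divr_ge0 ?ler0n //= ler_pdivrMr // mul1r ler_nat card_nbhd_setD_le_deg.
Qed.

Lemma adoptB_prob_itv B u : (0 < deg G u)%N -> 0 <= adoptB_prob k p G B u <= 1.
Proof.
move=> deg_gt0; rewrite adoptB_probE //.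
have /andP[f0 f1] := frac_nbhd_setD_itv B deg_gt0; case/andP: p01 => p0 p1.
set f := _ / _ in f0 f1 *.
have pf01 : 0 <= (1 - p) * f <= 1 by apply/andP; split; nra.
by have /andP[b0 b1] := bin_tail_itv k m pf01; apply/andP; split; lra.
Qed.

Lemma adoptR_prob_le B u (a : R) : (0 < deg G u)%N -> 0 <= a <= 1 ->
  #|nbhd G u :\: B|%:R <= a * (deg G u)%:R ->
  1 - adoptB_prob k p G B u <= bin_tail k m ((1 - p) * a).
Proof.
move=> deg_gt0 /andP[a0 a1] few; rewrite adoptB_probE // opprB addrC subrK.
have d_gt0 : (0 : R) < (deg G u)%:R by rewrite ltr0n.
have /andP[f0 f1] := frac_nbhd_setD_itv B deg_gt0; case/andP: p01 => p0 p1.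
have : #|nbhd G u :\: B|%:R / (deg G u)%:R <= a by rewrite ler_pdivrMr.
by move=> fa; apply: ler_bin_tail; nra.
Qed.

Hypothesis deg_gt0 : forall u, (0 < deg G u)%N.

Lemma trans_ge0 B B' : 0 <= trans k p G B B'.
Proof. exact: (indep_set_prob_ge0 (fun u => adoptB_prob_itv B (deg_gt0 u))). Qed.

Lemma sum_trans B : \sum_B' trans k p G B B' = 1.
Proof. exact: sum_indep_set_prob. Qed.

Lemma trans_many_R_neighbours_le B (a a' dl : R) :
  0 <= a <= 1 -> 0 < dl <= 1 -> bin_tail k m ((1 - p) * a) + dl <= a' ->
  (forall v, #|nbhd G v :\: B|%:R <= a * (deg G v)%:R) ->
  \sum_B' trans k p G B B' *
     (~~ [forall v, #|nbhd G v :\: B'|%:R <= a' * (deg G v)%:R])%:R <=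
  \sum_v expR (- (dl ^+ 2 / 8) * (deg G v)%:R).
Proof.
move=> a01 dl01 a'_ge few.
apply: le_trans (sum_union_bound _ (trans_ge0 B)) _; apply: ler_sum => v _.
under eq_bigr => B' _ do rewrite -ltNge.
have mu01 : 0 <= bin_tail k m ((1 - p) * a) <= 1.
  apply: bin_tail_itv; case/andP: a01 => a0 a1; case/andP: p01 => p0 p1.
  by apply/andP; split; nra.
apply: (indep_set_chernoff (fun u => adoptB_prob_itv B (deg_gt0 u)) mu01) => // u _.
exact: adoptR_prob_le.
Qed.

Lemma prob_tau_le_ge_chain_law T :
  \sum_B chain_law (trans k p G) finset.set0 T B * (majB R G B)%:R <= prob_tau_le k p G T.
Proof.
rewrite -sum_paths_chain_law /prob_tau_le; apply: ler_sum => path _.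
apply: ler_wpM2l; first by rewrite mulr_ge0 ?ler0n // prodr_ge0 // => t _; exact: trans_ge0.
case: (boolP (majB R G (path ord_max))) => maj; last by rewrite ler0n.
by rewrite (_ : [exists t, _] = true) //; apply/existsP; exists ord_max.
Qed.

End Dynamics.

Lemma prob_tau_le_ge_thresholds (R : realType) k (p : R) n (G : rel 'I_n) (a : nat -> R) (dl : R) T :
  odd k -> 0 <= p <= 1 -> simple_graph G -> (1 < n)%N -> 0 < dl <= 1 ->
  (forall t, 0 <= a t <= 1) -> a 0 = 1 -> a T < 1/2 ->
  (forall t, bin_tail k (k.+1)./2 ((1 - p) * a t) + dl <= a t.+1) ->
  (forall u, 16 / dl ^+ 2 * ln n%:R <= (deg G u)%:R) ->
  1 - T%:R / n%:R <= prob_tau_le k p G T.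
Proof.
move=> k_odd p01 G_simple n_gt1 dl01 a01 a0 aT a_step deg_ge.
have ln_gt0 : 0 < ln (n%:R : R) by rewrite ln_gt0 // ltr1n.
have [dl_gt0 _] := andP dl01.
have dl2_gt0 : 0 < dl ^+ 2 by rewrite exprn_gt0.
have deg_gt0 u : (0 < deg G u)%N.
  by rewrite -(ltr0n R); apply: lt_le_trans (deg_ge u); rewrite mulr_gt0 ?divr_gt0.
pose good t B := [forall v, #|nbhd G v :\: B|%:R <= a t * (deg G v)%:R].
have good0 : good 0 finset.set0.
  by apply/forallP => v; rewrite a0 mul1r ler_nat card_nbhd_setD_le_deg.
have escape t B : good t B ->
    \sum_B' trans k p G B B' * (~~ good t.+1 B')%:R <= n%:R^-1.
  move=> /forallP few.
  have := trans_many_R_neighbours_le k_odd p01 deg_gt0 (a01 t) dl01 (a_step t) few.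
  move/le_trans; apply.
  apply: sum_expR_le_inv => [|v]; first exact: ltnW.
  have -> : 2 * ln n%:R = dl ^+ 2 / 8 * (16 / dl ^+ 2 * ln n%:R) :> R.
    by field; rewrite gt_eqF.
  by rewrite ler_wpM2l ?deg_ge // ltW // divr_gt0.
have chain_ge0 := chain_law_ge0 finset.set0 (trans_ge0 k_odd p01 deg_gt0) T.
apply: le_trans (prob_tau_le_ge_chain_law k_odd p01 deg_gt0 T).
have := chain_law_good (trans_ge0 k_odd p01 deg_gt0) (@sum_trans R k p n G) good0 escape T.
move/le_trans; apply.
apply: ler_sum => B _; apply: ler_wpM2l => //.
case: (boolP (good T B)) => [/forallP few|_]; last by rewrite ler0n.
by rewrite (majB_of_few_R_neighbours G_simple _ deg_gt0 aT few) // ltnW.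
Qed.

Lemma prob_tau_le_ge_contraction (R : realType) k (p : R) n (G : rel 'I_n) (r : R) T :
  odd k -> 0 <= p <= 1 -> simple_graph G -> (1 < n)%N -> 0 <= r < 1 -> r ^+ T < 1/3 ->
  (forall x, 0 <= x <= 1 -> bin_tail k (k.+1)./2 ((1 - p) * x) <= r * x) ->
  (forall u, 256 / (1 - r) ^+ 2 * ln n%:R <= (deg G u)%:R) ->
  1 - T%:R / n%:R <= prob_tau_le k p G T.
Proof.
move=> k_odd p01 G_simple n_gt1 /andP[r0 r1] rT F_le deg_ge.
(* the orbit of 1 under x |-> r x + (1 - r) / 4 *)
pose a t := 1/4 + 3/4 * r ^+ t.
have a01 t : 0 <= a t <= 1.
  have : 0 <= r ^+ t <= 1 by rewrite exprn_ge0 // exprn_ile1 // ltW.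
  by rewrite /a => /andP[? ?]; apply/andP; split; lra.
apply: (prob_tau_le_ge_thresholds (a := a) (dl := (1 - r) / 4)) => // [|||t|u].
- by apply/andP; split; lra.
- by rewrite /a expr0; lra.
- by rewrite /a; lra.
- by have := F_le _ (a01 t); rewrite /a exprS; lra.
- rewrite (_ : 16 / _ = 256 / (1 - r) ^+ 2) //; field; lra.
Qed.

Unset Implicit Arguments.

Theorem corollary5p8 (R : realType) (k : nat) (p : R) :
  odd k -> (3 <= k)%N -> pstar R k < p -> p <= 1 ->
  exists T : nat,
    forall G : forall n : nat, rel 'I_n,
      (forall n, simple_graph (G n)) ->
      (* min degree = omega(log n) *)
      (forall C : R, 0 < C -> exists N : nat, forall n : nat, (N <= n)%N ->
         forall u : 'I_n, C * ln (n%:R : R) <= (deg (G n) u)%:R) ->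
      (* Pr(tau <= T) = 1 - o(1) *)
      (forall eps : R, 0 < eps -> exists N : nat, forall n : nat, (N <= n)%N ->
         1 - eps <= prob_tau_le k p (G n) T).
Proof.
move=> k_odd _ p_gt p1.
have [p' lt_p' [/andP[p'_ge0 _] _]] := pstar_adherent k_odd p_gt.
have p01 : 0 <= p <= 1 by rewrite p1 andbT (le_trans p'_ge0) // ltW.
have [r r01 F_le] := bin_tail_contraction k_odd p_gt p1.
have [T rT] : exists T : nat, r ^+ T < 1/3 by apply: (exists_expr_lt r01); lra.
exists T => G G_simple G_deg eps eps_gt0.
have [|N1 deg_ge] := G_deg (256 / (1 - r) ^+ 2).
  by case/andP: r01 => _ r1; rewrite divr_gt0 // exprn_gt0 // subr_gt0.
have [N2 N2_gt] : exists N2 : nat, T%:R / eps < N2%:R.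
  by exists (Num.bound (T%:R / eps)); rewrite archi_boundP // divr_ge0 // ltW.
exists (maxn (maxn N1 N2) 2) => n; rewrite !geq_max => /andP[/andP[nN1 nN2] n_gt1].
apply: le_trans (prob_tau_le_ge_contraction k_odd p01 (G_simple n) n_gt1 r01 rT F_le
                   (deg_ge n nN1)).
rewrite lerD2l lerN2 ler_pdivrMr ?ltr0n 1?ltnW //.
rewrite ltr_pdivrMr // in N2_gt; apply: (ltW (lt_le_trans N2_gt _)).
by rewrite mulrC ler_wpM2l ?ler_nat // ltW.
Qed.
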